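(* Assume: (1) there exists an $\mathcal{A}'$-linear map $\varphi_1:C^1_{\mathrm{CE,der}}(\mathcal{A},\mathcal{B})\to C^0_{\mathrm{CE,der}}(\mathcal{A},\mathcal{B})=\mathcal{B}$ such that every $D$ with $\delta D=0$ satisfies $D=\delta\varphi_1(D)$; and (2) there is an $\mathcal{A}'$-linear map $C^1_{\mathrm{CE,der}}(\mathcal{A}',\mathcal{B})\to\mathrm{Der}(\mathcal{B})$, $D\mapsto D^h$, with $D^h(\phi_0'(a'))=D(a')$ for all $a'\in\mathcal{A}'$. Then there exists $X'\in\lambda\mathrm{Der}(\mathcal{B})[[\lambda]]$ such that $\exp(X')\phi_0'(\mathcal{A}'[[\lambda]])\subseteq C$, i.e. $\sigma(\exp(X')\phi_0'(a'),\Phi(a))=0$ for all $a\in\mathcal{A}$, $a'\in\mathcal{A}'$.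
   Context: $\mathbb{K}$ is a field of characteristic zero. $\mathcal{A},\mathcal{B}$ are commutative $\mathbb{K}$-algebras with Poisson brackets $\pi_0=\{\cdot,\cdot\}_{\mathcal{A}}$, $\sigma_0=\{\cdot,\cdot\}_{\mathcal{B}}$; $\phi_0:\mathcal{A}\to\mathcal{B}$ is a Poisson morphism. $\pi,\sigma$ are formal Poisson deformations of $\pi_0,\sigma_0$ ($\mathbb{K}[[\lambda]]$-bilinear Poisson brackets on $\mathcal{A}[[\lambda]],\mathcal{B}[[\lambda]]$ with these zeroth-order terms), and $\Phi:(\mathcal{A}[[\lambda]],\pi)\to(\mathcal{B}[[\lambda]],\sigma)$ is a $\mathbb{K}[[\lambda]]$-linear Poisson morphism with zeroth-order term $\phi_0$. $\mathcal{A}'$ is the Poisson commutant of $\phi_0(\mathcal{A})$ in $(\mathcal{B},\sigma_0)$ and $\phi_0':\mathcal{A}'\to\mathcal{B}$ the inclusion; $C$ is the commutant of $\Phi(\mathcal{A}[[\lambda]])$ in $(\mathcal{B}[[\lambda]],\sigma)$. $\exp(X')=\sum_n(X')^n/n!$. Chevalley–Eilenberg complex (undeformed brackets): $C^0_{\mathrm{CE}}(\mathcal{A},\mathcal{B})=\mathcal{B}$, $C^k_{\mathrm{CE}}$ = $k$-linear antisymmetric maps $\mathcal{A}^k\to\mathcal{B}$, $(\delta D)(a_0,\dots,a_k)=\sum_j(-1)^j\{\phi_0(a_j),D(\dots,\widehat{a_j},\dots)\}_{\mathcal{B}}+\sum_{i<j}(-1)^{i+j}D(\{a_i,a_j\}_{\mathcal{A}},\dots,\widehat{a_i},\dots,\widehat{a_j},\dots)$;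 in particular $(\delta b)(a)=\{\phi_0(a),b\}_{\mathcal{B}}$ for $b\in\mathcal{B}$. $C^\bullet_{\mathrm{CE,der}}(\mathcal{A},\mathcal{B})$ is the subcomplex of cochains that are derivations along $\phi_0$ in each argument. $C^1_{\mathrm{CE,der}}(\mathcal{A}',\mathcal{B})$ is the space of linear maps $D:\mathcal{A}'\to\mathcal{B}$ with $D(a'_1a'_2)=\phi_0'(a'_1)D(a'_2)+\phi_0'(a'_2)D(a'_1)$. $\mathcal{A}'$ acts on these spaces and on $\mathcal{B}$ by multiplication by $\phi_0'(a')$ in $\mathcal{B}$. *)

From HB Require Import structures.
From mathcomp Require Import all_boot all_order all_algebra.
Set Implicit Arguments. Unset Strict Implicit. Unset Printing Implicit Defensive.
Import GRing.Theory.
Local Open Scope ring_scope.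

(* Formal power series V[[lambda]] as coefficient sequences. *)
Definition series (V : Type) := nat -> V.

Section Defs.
Variable K : fieldType.

Definition klinear (U V : lmodType K) (f : U -> V) :=
  forall (k : K) (x y : U), f (k *: x + y) = k *: f x + f y.

Definition kbilinear (U V : lmodType K) (b : U -> U -> V) :=
  (forall x, klinear (b x)) /\ (forall y, klinear (fun x => b x y)).

Definition is_poisson (A : comAlgType K) (br : A -> A -> A) :=
  [/\ kbilinear br,
      forall a b, br a b = - br b a,
      forall a b c, br a (br b c) + br b (br c a) + br c (br a b) = 0
    & forall a b c, br a (b * c) = br a b * c + b * br a c].

Definition is_der (B : comAlgType K) (X : B -> B) :=
  klinear X /\ forall x y, X (x * y) = x * X y + y * X x.

Definition sconst (V : zmodType) (c : V) : series V :=
  fun n => if n == 0%N then c else 0.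

Definition smul (A : comAlgType K) (f g : series A) : series A :=
  fun n => \sum_(i < n.+1) f i * g (n - i)%N.

Definition sadd (V : zmodType) (f g : series V) : series V := fun n => f n + g n.
Definition sscale (V : lmodType K) (k : K) (f : series V) : series V :=
  fun n => k *: f n.

(* K[[lambda]]-bilinear extension of a sequence of bilinear maps
   pi = sum_k lambda^k pi_k *)
Definition sbr (A : comAlgType K) (pi : nat -> A -> A -> A) (f g : series A)
  : series A :=
  fun n => \sum_(i < n.+1) \sum_(j < (n - i).+1) pi i (f j) (g (n - i - j)%N).

Definition is_formal_poisson (A : comAlgType K) (pi : nat -> A -> A -> A) :=
  [/\ forall k, kbilinear (pi k),
      forall f g n, sbr pi f g n = - sbr pi g f n,
      forall f g h n,
        sbr pi f (sbr pi g h) n + sbr pi g (sbr pi h f) n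
          + sbr pi h (sbr pi f g) n = 0
    & forall f g h n,
        sbr pi f (smul g h) n = sadd (smul (sbr pi f g) h) (smul g (sbr pi f h)) n].

(* K[[lambda]]-linear extension Phi = sum_k lambda^k phi_k *)
Definition sapp (A B : comAlgType K) (phi : nat -> A -> B) (f : series A)
  : series B :=
  fun n => \sum_(i < n.+1) phi i (f (n - i)%N).

Definition is_formal_poisson_morphism (A B : comAlgType K)
  (pi : nat -> A -> A -> A) (sigma : nat -> B -> B -> B) (phi : nat -> A -> B) :=
  [/\ forall k, klinear (phi k),
      forall n, sapp phi (sconst 1) n = sconst 1 n,
      forall f g n, sapp phi (smul f g) n = smul (sapp phi f) (sapp phi g) n
    & forall f g n, sapp phi (sbr pi f g) n = sbr sigma (sapp phi f) (sapp phi g) n].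

Definition in_commutant (A B : comAlgType K) (brB : B -> B -> B) (phi0 : A -> B)
  (b : B) := forall a : A, brB (phi0 a) b = 0.

Definition is_C1der (A B : comAlgType K) (phi0 : A -> B) (D : A -> B) :=
  klinear D /\ forall a1 a2, D (a1 * a2) = phi0 a1 * D a2 + phi0 a2 * D a1.

Definition delta0 (A B : comAlgType K) (brB : B -> B -> B) (phi0 : A -> B)
  (b : B) : A -> B := fun a => brB (phi0 a) b.

Definition delta1 (A B : comAlgType K) (brA : A -> A -> A) (brB : B -> B -> B)
  (phi0 : A -> B) (D : A -> B) : A -> A -> B :=
  fun a0 a1 => brB (phi0 a0) (D a1) - brB (phi0 a1) (D a0) - D (brA a0 a1).

(* C^1_{CE,der}(A',B), with A' given as a predicate on B; a cochain
   A' -> B is represented by any function B -> B, only its values on A'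
   matter. *)
Definition is_C1der' (B : comAlgType K) (A' : B -> Prop) (D : B -> B) :=
  (forall (k : K) x y, A' x -> A' y -> D (k *: x + y) = k *: D x + D y) /\
  (forall x y, A' x -> A' y -> D (x * y) = x * D y + y * D x).

(* action of X' = sum_k lambda^k X_k on B[[lambda]] *)
Definition sder (B : comAlgType K) (X : nat -> B -> B) (f : series B) : series B :=
  fun n => \sum_(i < n.+1) X i (f (n - i)%N).

(* exp(X') f = sum_m X'^m f / m!  (the sum is finite in each degree when X_0 = 0) *)
Definition sexp (B : comAlgType K) (X : nat -> B -> B) (f : series B) : series B :=
  fun n => \sum_(m < n.+1) (m`!%:R : K)^-1 *: iter m (sder X) f n.

End Defs.

(* The components X_1, X_2, ... of X' are chosen one degree at a time.
   Suppose X_1, ..., X_n make sigma(exp(X') f, Phi g) vanish in degrees <= n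
   for every A'-valued f.  In degree n+1 only the constant terms b = f_0 and
   a = g_0 then matter, and D_b(a) := sigma(exp(X') b, Phi a)_(n+1) is, for b
   in A', a derivation along phi_0 (Leibniz rule of sigma) and a
   Chevalley-Eilenberg 1-cocycle (Jacobi identity).  Hypothesis (1) gives
   D_b = delta(phi_1 D_b).  As exp(X') is multiplicative (this needs
   characteristic 0) and phi_1 is A'-linear, b |-> phi_1 D_b is a derivation
   of A' into B, which hypothesis (2) extends to a derivation X_(n+1) of B.
   Adding lambda^(n+1) X_(n+1) changes the coefficient of degree n+1 by
   sigma_0(X_(n+1) b, phi_0 a) = - D_b(a), which kills it. *)

From HB Require Import structures.
From mathcomp Require Import all_boot all_order all_algebra.
From mathcomp Require Import zify.
From Stdlib Require Import FunctionalExtensionality.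
Set Implicit Arguments. Unset Strict Implicit. Unset Printing Implicit Defensive.
Import GRing.Theory.
Local Open Scope ring_scope.

Section KLinear.
Variables (K : fieldType) (U V : lmodType K) (f : U -> V).
Hypothesis f_lin : klinear f.

(* [klinear f] is [linear f] unfolded, so MathComp's theory of linear maps applies. *)
HB.instance Definition _ := GRing.isLinear.Build K U V *:%R f f_lin.

Lemma klinear0 : f 0 = 0. Proof. exact: linear0. Qed.
Lemma klinearD x y : f (x + y) = f x + f y. Proof. exact: linearD. Qed.
Lemma klinearN x : f (- x) = - f x. Proof. exact: linearN. Qed.
Lemma klinearZ k x : f (k *: x) = k *: f x. Proof. exact: linearZ. Qed.
Lemma klinearMn x m : f (x *+ m) = f x *+ m. Proof. exact: linearMn. Qed.
Lemma klinear_sum I r (P : pred I) (F : I -> U) :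
  f (\sum_(i <- r | P i) F i) = \sum_(i <- r | P i) f (F i).
Proof. exact: linear_sum. Qed.
End KLinear.

Section TriangularSums.
Variable V : zmodType.

Lemma big_triangle n (F : nat -> nat -> V) :
  \sum_(i < n.+1) \sum_(j < (n - i).+1) F i j
  = \sum_(i < n.+1) \sum_(j < n.+1) (if (i + j <= n)%N then F i j else 0).
Proof.
apply: eq_bigr => i _; rewrite (big_ord_widen n.+1 (F i)) ?ltnS ?leq_subr //.
by rewrite big_mkcond; apply: eq_bigr => j _; rewrite ltnS leq_subRL ?leq_ord // -ltnS.
Qed.

Lemma exchange_big_triangle n (F : nat -> nat -> V) :
  \sum_(i < n.+1) \sum_(j < (n - i).+1) F i j
  = \sum_(j < n.+1) \sum_(i < (n - j).+1) F i j.
Proof.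
rewrite big_triangle (big_triangle _ (fun j i => F i j)) exchange_big /=.
by apply: eq_bigr => j _; apply: eq_bigr => i _; rewrite addnC.
Qed.

Lemma big_antidiagonal n (F : nat -> nat -> V) :
  \sum_(k < n.+1) \sum_(i < k.+1) F i (k - i)%N
  = \sum_(i < n.+1) \sum_(j < (n - i).+1) F i j.
Proof.
rewrite (eq_bigr (fun k : 'I_n.+1 =>
  \sum_(i < n.+1) (if (i <= k)%N then F i (k - i)%N else 0))); last first.
  move=> k _; rewrite (big_ord_widen n.+1 (fun i => F i (k - i)%N)) ?ltnS ?leq_ord //.
  by rewrite big_mkcond.
rewrite exchange_big /=; apply: eq_bigr => i _.
rewrite -big_mkcond /= -(big_geq_mkord i n.+1 xpredT (fun k => F i (k - i)%N)).
rewrite -{1}(add0n i) big_addn big_mkord subSn; last by rewrite -ltnS.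
by apply: eq_bigr => j _; rewrite addnK.
Qed.
End TriangularSums.

Definition sshift (V : zmodType) (f : series V) : series V :=
  fun n => if n is n'.+1 then f n' else 0.

Definition stail (V : Type) (f : series V) : series V := fun n => f n.+1.

Definition vanishes_below (V : zmodType) (f : series V) (N : nat) :=
  forall l, (l < N)%N -> f l = 0.

Lemma series_decomp (V : zmodType) (f : series V) :
  f = sadd (sconst (f 0%N)) (sshift (stail f)).
Proof.
by apply: functional_extensionality => -[|n]; rewrite /sadd /sconst /= ?addr0 ?add0r.
Qed.

Lemma sconstD (V : zmodType) (x y : V) : sconst (x + y) = sadd (sconst x) (sconst y).
Proof. by apply: functional_extensionality => -[|n]; rewrite /sadd /sconst /= ?addr0. Qed.

Lemma sconstZ (K : fieldType) (V : lmodType K) (k : K) (x : V) :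
  sconst (k *: x) = sscale k (sconst x).
Proof.
by apply: functional_extensionality => -[|n]; rewrite /sscale /sconst /= ?scaler0.
Qed.

Section SeriesProduct.
Variables (K : fieldType) (B : comAlgType K).
Implicit Types f g : series B.

Lemma smul_const (a b : B) : smul (sconst a) (sconst b) = sconst (a * b).
Proof.
apply: functional_extensionality => -[|n]; rewrite /smul /sconst ?big_ord1 //.
by rewrite big1 // => -[[|i] ?] _ /=; rewrite ?mulr0 ?mul0r.
Qed.

Lemma smul_orderl f g N : vanishes_below f N -> smul f g N = f N * g 0%N.
Proof.
move=> f_low; rewrite /smul big_ord_recr /= subnn big1 ?add0r // => i _.
by rewrite f_low ?mul0r.
Qed.

Lemma smul_orderr f g N : vanishes_below g N -> smul f g N = f 0%N * g N.
Proof.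
move=> g_low; rewrite /smul big_ord_recl /= subn0 big1 ?addr0 // => i _.
by rewrite g_low ?mulr0 //; rewrite /bump /=; have := ltn_ord i; lia.
Qed.

Lemma smul_vanishes f g p q : vanishes_below f p -> vanishes_below g q ->
  vanishes_below (smul f g) (p + q).
Proof.
move=> f_low g_low n n_lt; rewrite /smul big1 // => i _.
case: (ltnP i p) => i_p; first by rewrite f_low ?mul0r.
by rewrite g_low ?mulr0 //; have := ltn_ord i; lia.
Qed.
End SeriesProduct.

Section SeriesBracket.
Variables (K : fieldType) (A : comAlgType K) (pi : nat -> A -> A -> A).
Hypothesis pi_bilin : forall k, kbilinear (pi k).
Implicit Types f g : series A.

Let pi_linr k x : klinear (pi k x). Proof. exact: (pi_bilin k).1. Qed.
Let pi_linl k y : klinear (pi k ^~ y). Proof. exact: (pi_bilin k).2. Qed.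

Lemma sbr_addl f f' g n : sbr pi (sadd f f') g n = sbr pi f g n + sbr pi f' g n.
Proof.
rewrite /sbr -big_split; apply: eq_bigr => i _; rewrite -big_split.
by apply: eq_bigr => j _; rewrite /sadd (klinearD (pi_linl _ _)).
Qed.

Lemma sbr_addr f g g' n : sbr pi f (sadd g g') n = sbr pi f g n + sbr pi f g' n.
Proof.
rewrite /sbr -big_split; apply: eq_bigr => i _; rewrite -big_split.
by apply: eq_bigr => j _; rewrite /sadd klinearD.
Qed.

Lemma sbr_scalel c f g n : sbr pi (sscale c f) g n = c *: sbr pi f g n.
Proof.
rewrite /sbr scaler_sumr; apply: eq_bigr => i _; rewrite scaler_sumr.
by apply: eq_bigr => j _; rewrite /sscale (klinearZ (pi_linl _ _)).
Qed.

Lemma sbr_scaler c f g n : sbr pi f (sscale c g) n = c *: sbr pi f g n.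
Proof.
rewrite /sbr scaler_sumr; apply: eq_bigr => i _; rewrite scaler_sumr.
by apply: eq_bigr => j _; rewrite /sscale klinearZ.
Qed.

Lemma sbr0 f g : sbr pi f g 0%N = pi 0%N (f 0%N) (g 0%N).
Proof. by rewrite /sbr !big_ord1. Qed.

Lemma sbr_orderl f g N : vanishes_below f N -> sbr pi f g N = pi 0%N (f N) (g 0%N).
Proof.
move=> f_low; rewrite /sbr big_ord_recl /= subn0 big_ord_recr /= subnn.
rewrite big1 ?add0r; last by move=> j _; rewrite f_low ?(klinear0 (pi_linl _ _)).
rewrite big1 ?addr0 // => i _; rewrite big1 // => j _.
rewrite f_low ?(klinear0 (pi_linl _ _)) //.
by have := ltn_ord i; have := ltn_ord j; have : bump 0 i = i.+1 by []; lia.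
Qed.

Lemma sbr_orderr f g N : vanishes_below g N -> sbr pi f g N = pi 0%N (f 0%N) (g N).
Proof.
move=> g_low; rewrite /sbr big_ord_recl /= big_ord_recl /= !subn0.
rewrite big1 ?addr0; last first.
  by move=> j _; rewrite g_low ?klinear0 // /bump /=; have := ltn_ord j; lia.
rewrite big1 ?addr0 // => i _; rewrite big1 // => j _; rewrite g_low ?klinear0 //.
by rewrite /bump /=; have := ltn_ord i; have := ltn_ord j; lia.
Qed.

Lemma sbr_shiftl f g n : sbr pi (sshift f) g n.+1 = sbr pi f g n.
Proof.
rewrite /sbr big_ord_recr /= subnn big_ord1 /= (klinear0 (pi_linl _ _)) addr0.
apply: eq_bigr => i _ /=; have i_le := ltn_ord i.
rewrite (_ : (n.+1 - i).+1 = (n - i).+2)%N; last by lia.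
rewrite big_ord_recl /= (klinear0 (pi_linl _ _)) add0r; apply: eq_bigr => j _ /=.
by rewrite /bump /= add1n; congr (pi _ _ (g _)); lia.
Qed.

Lemma sbr_shiftr f g n : sbr pi f (sshift g) n.+1 = sbr pi f g n.
Proof.
rewrite /sbr big_ord_recr /= subnn big_ord1 /= klinear0 // addr0.
apply: eq_bigr => i _ /=; have i_le := ltn_ord i.
rewrite (_ : (n.+1 - i).+1 = (n - i).+2)%N; last by lia.
rewrite big_ord_recr /= (_ : (n.+1 - i - (n - i).+1)%N = 0%N); last by lia.
rewrite klinear0 // addr0; apply: eq_bigr => j _ /=; have j_le := ltn_ord j.
by rewrite (_ : (n.+1 - i - j)%N = (n - i - j).+1)%N; last by lia.
Qed.
End SeriesBracket.

Lemma sbr_eq_upto (K : fieldType) (A : comAlgType K) (pi : nat -> A -> A -> A)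
    (f f' g : series A) n :
  (forall j, (j <= n)%N -> f j = f' j) -> sbr pi f g n = sbr pi f' g n.
Proof.
move=> eq_f; apply: eq_bigr => i _; apply: eq_bigr => j _.
by rewrite eq_f //; have := ltn_ord i; have := ltn_ord j; lia.
Qed.

Section SeriesApplication.
Variables (K : fieldType) (A B : comAlgType K) (phi : nat -> A -> B).
Hypothesis phi_lin : forall k, klinear (phi k).
Implicit Types f g : series A.

Lemma sapp_add f g : sapp phi (sadd f g) = sadd (sapp phi f) (sapp phi g).
Proof.
apply: functional_extensionality => n; rewrite /sapp /sadd -big_split.
by apply: eq_bigr => i _; rewrite /sadd klinearD.
Qed.

Lemma sapp_scale c f : sapp phi (sscale c f) = sscale c (sapp phi f).
Proof.
apply: functional_extensionality => n; rewrite /sapp /sscale scaler_sumr.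
by apply: eq_bigr => i _; rewrite klinearZ.
Qed.

Lemma sapp0 f : sapp phi f 0%N = phi 0%N (f 0%N).
Proof. by rewrite /sapp big_ord1. Qed.

Lemma sapp_shift f : sapp phi (sshift f) = sshift (sapp phi f).
Proof.
apply: functional_extensionality => -[|n]; first by rewrite sapp0 /= klinear0.
rewrite /sapp big_ord_recr /= subnn /= klinear0 // addr0.
apply: eq_bigr => i _ /=; have i_le := ltn_ord i.
by rewrite (_ : (n.+1 - i)%N = (n - i).+1)%N; last by lia.
Qed.

Lemma sapp_const a n : sapp phi (sconst a) n = phi n a.
Proof.
rewrite /sapp big_ord_recr /= subnn /= big1 ?add0r // => i _.
by rewrite /sconst subn_eq0 leqNgt ltn_ord /= klinear0.
Qed.
End SeriesApplication.

Section SeriesDerivation.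
Variables (K : fieldType) (B : comAlgType K) (X : nat -> B -> B).
Hypothesis X_lin : forall k, klinear (X k).
Hypothesis X0 : forall b, X 0%N b = 0.
Implicit Types f g : series B.

Lemma iter_sder_add m f g :
  iter m (sder X) (sadd f g) = sadd (iter m (sder X) f) (iter m (sder X) g).
Proof. by elim: m => [|m IHm] //=; rewrite IHm [sder _ _]sapp_add. Qed.

Lemma iter_sder_scale m c f : iter m (sder X) (sscale c f) = sscale c (iter m (sder X) f).
Proof. by elim: m => [|m IHm] //=; rewrite IHm [sder _ _]sapp_scale. Qed.

Lemma iter_sder_shift m f : iter m (sder X) (sshift f) = sshift (iter m (sder X) f).
Proof. by elim: m => [|m IHm] //=; rewrite IHm [sder _ _]sapp_shift. Qed.

Lemma iter_sder_vanishes m f n : (n < m)%N -> iter m (sder X) f n = 0.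
Proof.
elim: m n => [|m IHm] n //= n_lt; rewrite /sder big1 // => -[[|i] i_lt] _ /=.
  by rewrite X0.
by rewrite IHm ?klinear0 //; lia.
Qed.

Lemma sexp_add f g : sexp X (sadd f g) = sadd (sexp X f) (sexp X g).
Proof.
apply: functional_extensionality => n; rewrite /sexp /sadd -big_split.
by apply: eq_bigr => m _; rewrite iter_sder_add scalerDr.
Qed.

Lemma sexp_scale c f : sexp X (sscale c f) = sscale c (sexp X f).
Proof.
apply: functional_extensionality => n; rewrite /sexp /sscale scaler_sumr.
by apply: eq_bigr => m _; rewrite iter_sder_scale !scalerA mulrC.
Qed.

Lemma sexp0 f : sexp X f 0%N = f 0%N.
Proof. by rewrite /sexp big_ord1 /= invr1 scale1r. Qed.

Lemma sexp_shift f : sexp X (sshift f) = sshift (sexp X f).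
Proof.
apply: functional_extensionality => -[|n]; first by rewrite sexp0.
rewrite /sexp; under eq_bigr do rewrite iter_sder_shift.
by rewrite big_ord_recr /= -iterS iter_sder_vanishes // scaler0 addr0.
Qed.

Lemma sexp_widen f n M : (n < M)%N ->
  sexp X f n = \sum_(m < M) (m`!%:R : K)^-1 *: iter m (sder X) f n.
Proof.
move=> n_lt; rewrite /sexp.
rewrite (big_ord_widen M (fun m => (m`!%:R : K)^-1 *: iter m (sder X) f n)) //.
rewrite big_mkcond /=; apply: eq_bigr => m _; case: ifP => // /negbT m_big.
by rewrite iter_sder_vanishes ?scaler0 //; lia.
Qed.
End SeriesDerivation.

Section SeriesDerivationLocality.
Variables (K : fieldType) (B : comAlgType K) (X Y : nat -> B -> B) (n : nat).
Implicit Types f : series B.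

Lemma iter_sder_eq_upto : (forall i b, (i <= n)%N -> X i b = Y i b) ->
  forall m f j, (j <= n)%N -> iter m (sder X) f j = iter m (sder Y) f j.
Proof.
move=> eq_XY; elim=> [|m IHm] f j j_le //=; apply: eq_bigr => i _.
by have i_lt := ltn_ord i; rewrite eq_XY ?IHm //; lia.
Qed.

Lemma sexp_eq_upto : (forall i b, (i <= n)%N -> X i b = Y i b) ->
  forall f j, (j <= n)%N -> sexp X f j = sexp Y f j.
Proof.
by move=> eq_XY f j j_le; apply: eq_bigr => m _; rewrite (iter_sder_eq_upto eq_XY).
Qed.

Hypothesis X_lin : forall k, klinear (X k).
Hypothesis Y_lin : forall k, klinear (Y k).
Hypothesis X0 : forall b, X 0%N b = 0.
Hypothesis XS0 : forall b, X n.+1 b = 0.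
Hypothesis eq_YX : forall i b, (i <= n)%N -> Y i b = X i b.

(* Two or more applications of [sder Y] reaching degree [n.+1] only involve
   the components [Y i] with [0 < i <= n]. *)
Lemma iter_sder_update m f : iter m (sder Y) f n.+1 =
  iter m (sder X) f n.+1 + (if m == 1%N then Y n.+1 (f 0%N) else 0).
Proof.
case: m => [|[|m]]; first by rewrite /= addr0.
  rewrite /= /sder /sapp big_ord_recr [in RHS]big_ord_recr /= subnn XS0 addr0.
  by congr (_ + _); apply: eq_bigr => i _; rewrite eq_YX // -ltnS ltn_ord.
rewrite addr0 iterS [in RHS]iterS; apply: eq_bigr => k _.
have k_le := ltn_ord k; case: (posnP k) => [->|k_gt0].
  by rewrite eq_YX // !X0.
case: (ltnP k n.+1) => k_lt.
  rewrite eq_YX; last by rewrite -ltnS.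
  congr (X k _); symmetry.
  by apply: iter_sder_eq_upto => [i b i_le|]; [rewrite eq_YX | lia].
have -> : (n.+1 - k = 0)%N by lia.
have Y0 b : Y 0%N b = 0 by rewrite eq_YX.
by rewrite !iter_sder_vanishes // (klinear0 (X_lin _)) (klinear0 (Y_lin _)).
Qed.

Lemma sexp_update f : sexp Y f n.+1 = sexp X f n.+1 + Y n.+1 (f 0%N).
Proof.
rewrite /sexp; under eq_bigr do rewrite iter_sder_update scalerDr.
rewrite big_split /=; congr (_ + _).
rewrite 2!big_ord_recl /= scaler0 add0r invr1 scale1r big1 ?addr0 // => i _.
by rewrite scaler0.
Qed.
End SeriesDerivationLocality.

Lemma big_pascal (V : zmodType) m (T : nat -> nat -> V) :
  \sum_(j < m.+1) (T j.+1 (m - j)%N + T j (m.+1 - j)%N) *+ 'C(m, j)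
  = \sum_(j < m.+2) T j (m.+1 - j)%N *+ 'C(m.+1, j).
Proof.
rewrite big_ord_recl [RHS]big_ord_recl /= !bin0 !subn0 !mulr1n.
have binS_term (j : 'I_m.+1) : T (bump 0 j) (m.+1 - bump 0 j)%N *+ 'C(m.+1, bump 0 j)
    = T j.+1 (m - j)%N *+ 'C(m, j.+1) + T j.+1 (m - j)%N *+ 'C(m, j).
  by rewrite /bump /= add1n subSS binS mulrnDr.
have split_term (j : 'I_m) :
    (T (bump 0 j).+1 (m - bump 0 j)%N + T (bump 0 j) (m.+1 - bump 0 j)%N)
      *+ 'C(m, bump 0 j)
    = T (bump 0 j).+1 (m - bump 0 j)%N *+ 'C(m, bump 0 j) + T j.+1 (m - j)%N *+ 'C(m, j.+1).
  by rewrite mulrnDl /bump /= add1n subSS.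
rewrite (eq_bigr _ (fun j _ => binS_term j)) (eq_bigr _ (fun j _ => split_term j)).
rewrite !big_split /= [X in _ = _ + (X + _)]big_ord_recr /= bin_small // mulr0n addr0.
rewrite [X in _ = _ + (_ + X)]big_ord_recl /= subn0 bin0 mulr1n.
rewrite [T 1%N m + _]addrC -addrA; congr (_ + _).
by rewrite addrA addrC.
Qed.

Section SeriesDerivationProduct.
Variables (K : fieldType) (B : comAlgType K) (X : nat -> B -> B).
Hypothesis X_der : forall k, is_der (X k).
Implicit Types f g : series B.

Let X_lin k : klinear (X k). Proof. exact: (X_der k).1. Qed.

Lemma sder_leibniz f g n :
  sder X (smul f g) n = smul (sder X f) g n + smul f (sder X g) n.
Proof.
have -> : smul (sder X f) g n =
    \sum_(i < n.+1) \sum_(j < (n - i).+1) X i (f j) * g (n - i - j)%N.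
  rewrite -(big_antidiagonal n (fun i j => X i (f j) * g (n - i - j)%N)).
  apply: eq_bigr => k _; rewrite mulr_suml; apply: eq_bigr => i _.
  have k_lt := ltn_ord k; have i_lt := ltn_ord i.
  by rewrite (_ : n - i - (k - i) = n - k)%N //; lia.
have -> : smul f (sder X g) n =
    \sum_(i < n.+1) \sum_(j < (n - i).+1) f j * X i (g (n - i - j)%N).
  rewrite (exchange_big_triangle n (fun i j => f j * X i (g (n - i - j)%N))).
  apply: eq_bigr => k _; rewrite mulr_sumr; apply: eq_bigr => i _.
  by rewrite subnAC.
rewrite -big_split; apply: eq_bigr => i _.
rewrite (klinear_sum (X_lin i)) -big_split; apply: eq_bigr => j _.
by rewrite (X_der i).2 addrC mulrC [X i (f j) * _]mulrC.
Qed.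

Lemma iter_sder_leibniz m f g n : iter m (sder X) (smul f g) n =
  \sum_(j < m.+1) smul (iter j (sder X) f) (iter (m - j) (sder X) g) n *+ 'C(m, j).
Proof.
elim: m n => [|m IHm] n; first by rewrite big_ord1 /= mulr1n.
rewrite iterS /sder /sapp.
under eq_bigr do rewrite IHm (klinear_sum (X_lin _)).
under eq_bigr do under eq_bigr do rewrite (klinearMn (X_lin _)).
rewrite exchange_big /=.
under eq_bigr do rewrite sumrMnl.
rewrite -(big_pascal m (fun a b => smul (iter a (sder X) f) (iter b (sder X) g) n)).
apply: eq_bigr => j _; congr (_ *+ _).
etransitivity; first exact: sder_leibniz.
congr (_ + _).
by have j_lt := ltn_ord j; rewrite (_ : m.+1 - j = (m - j).+1)%N //; lia.
Qed.
End SeriesDerivationProduct.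

Lemma invfact_binomial (K : fieldType) m j : [pchar K] =i pred0 -> (j <= m)%N ->
  (m`!%:R : K)^-1 * 'C(m, j)%:R = (j`!%:R)^-1 * ((m - j)`!%:R)^-1.
Proof.
move=> K0 j_le; have natf_neq0 k : (0 < k)%N -> (k%:R : K) != 0.
  by move=> k_gt0; rewrite (proj1 (pcharf0P K) K0) -lt0n.
have binC_neq0 : ('C(m, j)%:R : K) != 0 by rewrite natf_neq0 ?bin_gt0.
by rewrite -(bin_fact j_le) !natrM !invfM mulrC !mulrA mulfV // mul1r.
Qed.

Section SeriesExponential.
Variables (K : fieldType) (B : comAlgType K) (X : nat -> B -> B).
Hypothesis K0 : [pchar K] =i pred0.
Hypothesis X_der : forall k, is_der (X k).
Hypothesis X0 : forall b, X 0%N b = 0.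
Implicit Types f g : series B.

Let X_lin k : klinear (X k). Proof. exact: (X_der k).1. Qed.

Lemma sexp_smul_expand f g n : sexp X (smul f g) n =
  \sum_(p < n.+1) \sum_(q < (n - p).+1) ((p`!%:R : K)^-1 * (q`!%:R)^-1) *:
    smul (iter p (sder X) f) (iter q (sder X) g) n.
Proof.
rewrite -(big_antidiagonal n (fun p q => ((p`!%:R : K)^-1 * (q`!%:R)^-1) *:
    smul (iter p (sder X) f) (iter q (sder X) g) n)).
apply: eq_bigr => m _; rewrite iter_sder_leibniz // scaler_sumr.
apply: eq_bigr => j _; have j_le : (j <= m)%N by rewrite -ltnS.
by rewrite -scaler_nat scalerA invfact_binomial.
Qed.

Lemma smul_sexp_expand f g n : smul (sexp X f) (sexp X g) n =
  \sum_(p < n.+1) \sum_(q < n.+1) ((p`!%:R : K)^-1 * (q`!%:R)^-1) *: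
    smul (iter p (sder X) f) (iter q (sder X) g) n.
Proof.
rewrite /smul.
under eq_bigr => i _ do rewrite (sexp_widen X_lin X0 f (M := n.+1)) ?ltn_ord //
  (sexp_widen X_lin X0 g (M := n.+1)) ?ltnS ?leq_subr // mulr_suml.
rewrite exchange_big /=; apply: eq_bigr => p _.
under eq_bigr => i _ do rewrite mulr_sumr.
rewrite exchange_big /=; apply: eq_bigr => q _; rewrite scaler_sumr.
by apply: eq_bigr => i _; rewrite -scalerAl -scalerAr scalerA.
Qed.

Lemma sexp_mul f g : sexp X (smul f g) = smul (sexp X f) (sexp X g).
Proof.
apply: functional_extensionality => n.
rewrite sexp_smul_expand smul_sexp_expand; apply: eq_bigr => p _.
rewrite (big_ord_widen n.+1 (fun q => ((p`!%:R : K)^-1 * (q`!%:R)^-1) *: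
    smul (iter p (sder X) f) (iter q (sder X) g) n)) ?ltnS ?leq_subr //.
rewrite big_mkcond /=; apply: eq_bigr => q _; case: ifP => // /negbT q_big.
rewrite (@smul_vanishes _ _ _ _ p q) ?scaler0 //; last by have := ltn_ord p; lia.
- by move=> i i_lt; rewrite iter_sder_vanishes.
- by move=> i i_lt; rewrite iter_sder_vanishes.
Qed.
End SeriesExponential.

Lemma is_der0 (K : fieldType) (B : comAlgType K) : is_der (fun _ : B => 0 : B).
Proof. by split=> [k x y|x y]; rewrite ?scaler0 ?mulr0 addr0. Qed.

Lemma is_C1der_mull (K : fieldType) (A B : comAlgType K) (phi0 : A -> B) (c : B) D :
  is_C1der phi0 D -> is_C1der phi0 (fun a => c * D a).
Proof.
move=> [D_lin D_der]; split=> [k x y|x y]; first by rewrite D_lin mulrDr scalerAr.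
by rewrite D_der mulrDr !mulrA ![c * phi0 _]mulrC.
Qed.

Section PoissonCommutant.
Variables (K : fieldType) (A B : comAlgType K) (br : B -> B -> B) (phi0 : A -> B).
Hypothesis br_poisson : is_poisson br.

Lemma poisson_br1 x : br x 1 = 0.
Proof.
have [_ _ _ br_der] := br_poisson; have := br_der x 1 1; rewrite !mulr1 mul1r.
by move=> e; apply: (addrI (br x 1)); rewrite addr0 -e.
Qed.

Lemma in_commutant0 : in_commutant br phi0 0.
Proof. by case: br_poisson => -[br_lin _] _ _ _ a; rewrite (klinear0 (br_lin _)). Qed.

Lemma in_commutant_scalar (k : K) : in_commutant br phi0 k%:A.
Proof.
case: br_poisson => -[br_lin _] _ _ _ a.
by rewrite (klinearZ (br_lin _)) poisson_br1 scaler0.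
Qed.

Lemma in_commutant_sconst b : in_commutant br phi0 b ->
  forall n, in_commutant br phi0 (sconst b n).
Proof. by move=> b_comm [|n] //; exact: in_commutant0. Qed.
End PoissonCommutant.

Section Construction.
Variables (K : fieldType) (A B : comAlgType K).
Variables (pi : nat -> A -> A -> A) (sigma : nat -> B -> B -> B) (phi : nat -> A -> B).
Hypothesis K0 : [pchar K] =i pred0.
Hypothesis sigma0_poisson : is_poisson (sigma 0%N).
Hypothesis sigma_poisson : is_formal_poisson sigma.
Hypothesis Phi_morph : is_formal_poisson_morphism pi sigma phi.

Notation A' := (in_commutant (sigma 0%N) (phi 0%N)).
Notation Phi := (sapp phi).

Variable phi1 : (A -> B) -> B.
Hypothesis phi1D : forall D1 D2, is_C1der (phi 0%N) D1 -> is_C1der (phi 0%N) D2 ->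
  phi1 (fun a => D1 a + D2 a) = phi1 D1 + phi1 D2.
Hypothesis phi1_mull : forall (a' : B) D, A' a' -> is_C1der (phi 0%N) D ->
  phi1 (fun a => a' * D a) = a' * phi1 D.
Hypothesis phi1_coboundary : forall D, is_C1der (phi 0%N) D ->
  (forall a0 a1, delta1 (pi 0%N) (sigma 0%N) (phi 0%N) D a0 a1 = 0) ->
  forall a, D a = delta0 (sigma 0%N) (phi 0%N) (phi1 D) a.

Variable h : (B -> B) -> B -> B.
Hypothesis h_der : forall D, is_C1der' A' D -> is_der (h D).
Hypothesis h_ext : forall D, is_C1der' A' D -> forall a', A' a' -> h D a' = D a'.

Let sigma_bilin : forall k, kbilinear (sigma k). Proof. by case: sigma_poisson. Qed.
Let sbr_anti f g n : sbr sigma f g n = - sbr sigma g f n.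
Proof. by case: sigma_poisson. Qed.
Let sbr_jacobi f g k n : sbr sigma f (sbr sigma g k) n + sbr sigma g (sbr sigma k f) n
  + sbr sigma k (sbr sigma f g) n = 0.
Proof. by case: sigma_poisson. Qed.
Let sbr_leibniz f g k n : sbr sigma f (smul g k) n =
  sadd (smul (sbr sigma f g) k) (smul g (sbr sigma f k)) n.
Proof. by case: sigma_poisson. Qed.
Let sigma0_anti x y : sigma 0%N x y = - sigma 0%N y x.
Proof. by case: sigma0_poisson. Qed.
Let phi_lin k : klinear (phi k). Proof. by case: Phi_morph. Qed.
Let Phi_mul f g : Phi (smul f g) = smul (Phi f) (Phi g).
Proof. by case: Phi_morph => _ _ PhiM _; apply: functional_extensionality. Qed.
Let Phi_br f g : Phi (sbr pi f g) = sbr sigma (Phi f) (Phi g).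
Proof. by case: Phi_morph => _ _ _ PhiB; apply: functional_extensionality. Qed.

Definition commutes_upto (X : nat -> B -> B) n := forall f g, (forall k, A' (f k)) ->
  vanishes_below (sbr sigma (sexp X f) (Phi g)) n.+1.

Definition solution_upto X n := [/\ forall i, is_der (X i), forall b, X 0%N b = 0,
  forall i b, (n < i)%N -> X i b = 0 & commutes_upto X n].

Definition obstruction X n b a := sbr sigma (sexp X (sconst b)) (Phi (sconst a)) n.

Definition correction X n b := phi1 (obstruction X n b).

Definition extend X n i := if i == n.+1 then h (correction X n.+1) else X i.

Fixpoint approx n := if n is m.+1 then extend (approx m) m else fun _ _ => 0.

Lemma approx_solution0 : solution_upto (approx 0) 0.
Proof.
split=> //= [i|f g f_A' [|//] _]; first exact: is_der0.
by rewrite sbr0 sexp0 // sapp0 sigma0_anti f_A' oppr0.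
Qed.

Section Step.
Variables (X : nat -> B -> B) (n : nat).
Hypothesis X_solution : solution_upto X n.

Let X_der : forall i, is_der (X i). Proof. by case: X_solution. Qed.
Let X_lin i : klinear (X i). Proof. exact: (X_der i).1. Qed.
Let X0 : forall b, X 0%N b = 0. Proof. by case: X_solution. Qed.
Let X_high : forall i b, (n < i)%N -> X i b = 0. Proof. by case: X_solution. Qed.
Let X_commutes : commutes_upto X n. Proof. by case: X_solution. Qed.

Let X_commutes_sym f g : (forall k, A' (f k)) ->
  vanishes_below (sbr sigma (Phi g) (sexp X f)) n.+1.
Proof. by move=> f_A' m m_lt; rewrite sbr_anti X_commutes ?oppr0. Qed.

Lemma bracket_reduce f g : (forall k, A' (f k)) ->
  sbr sigma (sexp X f) (Phi g) n.+1 = obstruction X n.+1 (f 0%N) (g 0%N).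
Proof.
move=> f_A'; have b_A' := in_commutant_sconst sigma0_poisson (f_A' 0%N).
rewrite {1}(series_decomp f) sexp_add // sbr_addl // sexp_shift // sbr_shiftl //.
rewrite (@X_commutes (stail f) g (fun k => f_A' k.+1) n (ltnSn n)) addr0.
rewrite {1}(series_decomp g) sapp_add // sbr_addr // sapp_shift // sbr_shiftr //.
by rewrite (@X_commutes (sconst (f 0%N)) (stail g) b_A' n (ltnSn n)) addr0.
Qed.

Lemma obstruction_C1der b : A' b -> is_C1der (phi 0%N) (obstruction X n.+1 b).
Proof.
move=> b_A'; have f_A' := in_commutant_sconst sigma0_poisson b_A'.
split=> [k x y|a1 a2]; rewrite /obstruction.
  by rewrite sconstD sconstZ sapp_add // sapp_scale // sbr_addr // sbr_scaler.
rewrite -smul_const Phi_mul sbr_leibniz /sadd.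
rewrite smul_orderl; last exact: X_commutes f_A'.
rewrite smul_orderr; last exact: X_commutes f_A'.
by rewrite !sapp_const // addrC [_ * phi 0%N a2]mulrC.
Qed.

Lemma obstruction_cocycle b : A' b -> forall a0 a1,
  delta1 (pi 0%N) (sigma 0%N) (phi 0%N) (obstruction X n.+1 b) a0 a1 = 0.
Proof.
move=> b_A' a0 a1; have f_A' := in_commutant_sconst sigma0_poisson b_A'.
have := sbr_jacobi (sexp X (sconst b)) (Phi (sconst a0)) (Phi (sconst a1)) n.+1.
rewrite -Phi_br bracket_reduce // sbr0.
rewrite [Z in _ + Z + _]sbr_orderr //; last exact: X_commutes_sym f_A'.
rewrite [Z in _ + _ + Z]sbr_orderr //; last exact: X_commutes f_A'.
rewrite /= !sapp0 // sbr_anti (klinearN ((sigma_bilin 0).1 _)) => jacobi.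
rewrite /delta1 -[RHS]oppr0 -jacobi !opprD !opprK.
by rewrite addrC !addrA.
Qed.

Lemma obstruction_coboundary b a : A' b ->
  obstruction X n.+1 b a = sigma 0%N (phi 0%N a) (correction X n.+1 b).
Proof.
move=> b_A'; exact: phi1_coboundary (obstruction_C1der b_A') (obstruction_cocycle b_A') a.
Qed.

Lemma obstruction_linear (k : K) x y : obstruction X n.+1 (k *: x + y) =
  (fun a => k%:A * obstruction X n.+1 x a + obstruction X n.+1 y a).
Proof.
apply: functional_extensionality => a; rewrite /obstruction mulr_algl.
by rewrite sconstD sconstZ sexp_add // sexp_scale // sbr_addl // sbr_scalel.
Qed.

Lemma obstruction_leibniz x y : A' x -> A' y -> obstruction X n.+1 (x * y) =
  (fun a => x * obstruction X n.+1 y a + y * obstruction X n.+1 x a).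
Proof.
move=> /(in_commutant_sconst sigma0_poisson) x_A'.
move=> /(in_commutant_sconst sigma0_poisson) y_A'.
apply: functional_extensionality => a; rewrite /obstruction -smul_const sexp_mul //.
rewrite sbr_anti sbr_leibniz /sadd.
rewrite smul_orderl; last exact: X_commutes_sym x_A'.
rewrite smul_orderr; last exact: X_commutes_sym y_A'.
rewrite !sexp0 // [sbr _ (Phi _) _ _]sbr_anti [sbr _ (Phi _) _ _]sbr_anti.
by rewrite mulNr mulrN opprD !opprK addrC [_ * sconst y _]mulrC.
Qed.

Lemma correction_C1der' : is_C1der' A' (correction X n.+1).
Proof.
have D_C1der b : A' b -> is_C1der (phi 0%N) (obstruction X n.+1 b).
  exact: obstruction_C1der.
have cD_C1der c b : A' b -> is_C1der (phi 0%N) (fun a => c * obstruction X n.+1 b a).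
  by move=> b_A'; apply/is_C1der_mull/D_C1der.
have scalar_A' (k : K) : A' k%:A by exact: in_commutant_scalar (phi 0%N) sigma0_poisson k.
split=> [k x y x_A' y_A'|x y x_A' y_A']; rewrite /correction.
  rewrite obstruction_linear phi1D ?phi1_mull ?mulr_algl;
    by [| apply: D_C1der | apply: cD_C1der].
rewrite obstruction_leibniz // phi1D ?phi1_mull; by [| apply: D_C1der | apply: cD_C1der].
Qed.

Let extend_low i b : (i <= n)%N -> extend X n i b = X i b.
Proof. by move=> i_le; rewrite /extend ltn_eqF. Qed.

Let extend_der i : is_der (extend X n i).
Proof.
by rewrite /extend; case: ifP => _; [exact/h_der/correction_C1der' | exact: X_der].
Qed.

Lemma sexp_extend f j : (j <= n.+1)%N -> sexp (extend X n) f j =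
  sexp X f j + (if j == n.+1 then h (correction X n.+1) (f 0%N) else 0).
Proof.
rewrite leq_eqVlt ltnS => /predU1P[->|j_le].
  have XS0 b : X n.+1 b = 0 by exact: X_high.
  rewrite eqxx (sexp_update X_lin (fun i => (extend_der i).1) X0 XS0 extend_low).
  by rewrite /extend eqxx.
rewrite ltn_eqF ?ltnS // addr0; apply: (sexp_eq_upto (n := j)) => // i b i_le.
by rewrite extend_low //; exact: leq_trans j_le.
Qed.

Lemma extend_solution : solution_upto (extend X n) n.+1.
Proof.
split=> [i|b|i b i_gt|f g f_A' m].
- exact: extend_der.
- by rewrite extend_low.
- by rewrite /extend gtn_eqF // X_high // ltnW.
pose d j := if j == n.+1 then h (correction X n.+1) (f 0%N) else 0.
have d_low l : (l < n.+1)%N -> d l = 0 by move=> l_lt; rewrite /d ltn_eqF.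
rewrite ltnS => m_le; rewrite (sbr_eq_upto _ (f' := sadd (sexp X f) d)); last first.
  by move=> j j_le; rewrite sexp_extend //; exact: leq_trans m_le.
rewrite sbr_addl // [Z in _ + Z]sbr_orderl //; last first.
  by move=> l l_lt; apply: d_low; exact: leq_trans l_lt m_le.
case: (ltnP m n.+1) => [m_lt|m_ge].
  by rewrite X_commutes // d_low // (klinear0 ((sigma_bilin 0).2 _)) addr0.
have -> : m = n.+1 by apply/eqP; rewrite eqn_leq m_le.
rewrite bracket_reduce // obstruction_coboundary // /d eqxx sapp0 //.
rewrite h_ext //; last exact: correction_C1der'.
by rewrite [sigma 0%N (correction _ _ _) _]sigma0_anti subrr.
Qed.
End Step.

Lemma approx_solution n : solution_upto (approx n) n.
Proof. by elim: n => [|n IHn]; [exact: approx_solution0 | exact: extend_solution]. Qed.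

Lemma approx_stable n m i : (i <= n)%N -> (n <= m)%N -> approx m i = approx n i.
Proof.
move=> i_le; elim: m => [|m IHm]; first by rewrite leqn0 => /eqP->.
rewrite leq_eqVlt ltnS => /predU1P[-> //|n_le].
by rewrite /= /extend ltn_eqF ?IHm // ltnS (leq_trans i_le).
Qed.

Lemma approx_diag_commutes : forall f g, (forall k, A' (f k)) ->
  forall n, sbr sigma (sexp (fun k => approx k k) f) (Phi g) n = 0.
Proof.
move=> f g f_A' n; have [_ _ _ commutes] := approx_solution n.
rewrite (sbr_eq_upto _ (f' := sexp (approx n) f)).
  exact: commutes f g f_A' n (ltnSn n).
move=> j j_le; apply: (sexp_eq_upto (n := n)) => // i b i_le.
by rewrite (approx_stable (leqnn i) i_le).
Qed.
End Construction.

Unset Implicit Arguments.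

Theorem proposition3p12 (K : fieldType) (A B : comAlgType K)
  (pi : nat -> A -> A -> A) (sigma : nat -> B -> B -> B) (phi : nat -> A -> B)
  (HK : [pchar K] =i pred0)
  (HpiA : is_poisson (pi 0%N)) (HsigB : is_poisson (sigma 0%N))
  (Hpi : is_formal_poisson pi) (Hsigma : is_formal_poisson sigma)
  (HPhi : is_formal_poisson_morphism pi sigma phi)
  (* hypothesis (1) *)
  (phi1 : (A -> B) -> B)
  (Hphi1_add : forall D1 D2, is_C1der (phi 0%N) D1 -> is_C1der (phi 0%N) D2 ->
      phi1 (fun a => D1 a + D2 a) = phi1 D1 + phi1 D2)
  (Hphi1_lin : forall (a' : B) D, in_commutant (sigma 0%N) (phi 0%N) a' ->
      is_C1der (phi 0%N) D -> phi1 (fun a => a' * D a) = a' * phi1 D)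
  (Hphi1 : forall D, is_C1der (phi 0%N) D ->
      (forall a0 a1, delta1 (pi 0%N) (sigma 0%N) (phi 0%N) D a0 a1 = 0) ->
      forall a, D a = delta0 (sigma 0%N) (phi 0%N) (phi1 D) a)
  (* hypothesis (2) *)
  (h : (B -> B) -> (B -> B))
  (Hh_der : forall D, is_C1der' (in_commutant (sigma 0%N) (phi 0%N)) D ->
      is_der (h D))
  (Hh_ext : forall D, is_C1der' (in_commutant (sigma 0%N) (phi 0%N)) D ->
      forall a', in_commutant (sigma 0%N) (phi 0%N) a' -> h D a' = D a')
  (Hh_add : forall D1 D2,
      is_C1der' (in_commutant (sigma 0%N) (phi 0%N)) D1 ->
      is_C1der' (in_commutant (sigma 0%N) (phi 0%N)) D2 ->
      forall b, h (fun x => D1 x + D2 x) b = h D1 b + h D2 b)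
  (Hh_lin : forall (a' : B) D, in_commutant (sigma 0%N) (phi 0%N) a' ->
      is_C1der' (in_commutant (sigma 0%N) (phi 0%N)) D ->
      forall b, h (fun x => a' * D x) b = a' * h D b) :
  exists X : nat -> B -> B,
    (forall b, X 0%N b = 0) /\ (forall k, is_der (X k)) /\
    forall (f : series B) (g : series A),
      (forall n, in_commutant (sigma 0%N) (phi 0%N) (f n)) ->
      forall n, sbr sigma (sexp X f) (sapp phi g) n = 0.
Proof.
have solution n :=
  approx_solution HK HsigB Hsigma HPhi Hphi1_add Hphi1_lin Hphi1 Hh_der Hh_ext n.
exists (fun k => approx sigma phi phi1 h k k); split; [|split].
- by have [] := solution 0%N.
- by move=> k; have [] := solution k.
- exact (approx_diag_commutes HK HsigB Hsigma HPhi Hphi1_add Hphi1_lin Hphi1 Hh_der Hh_ext).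
Qed.
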